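(* The map $\mathcal{A}\ni A\mapsto\mathcal{P}_A\in\mathrm{Fix}(\Pi)$ is injective.
   Context: mm-spaces are triples $(X,d_X,\mu_X)$ with $(X,d_X)$ complete separable metric and $\mu_X$ a Borel probability measure, with $X=\operatorname{supp}\mu_X$. $\mathcal{X}$ is the set of their isomorphism classes under measure-preserving isometries of supports. A pyramid is a nonempty subset of $\mathcal{X}$ that is closed for the box distance, downward closed under the Lipschitz order ($Y\prec X$ iff there is a 1-Lipschitz $f\colon X\to Y$ with $f_*\mu_X=\mu_Y$), and such that any two elements are dominated by a common element. $\Pi$ is the set of pyramids. $\mathbb{R}_+$ acts on $\Pi$ by $t\mathcal{P}=\{(X,t\,d_X,\mu_X):X\in\mathcal{P}\}$, and $\mathrm{Fix}(\Pi)$ is its fixed-point set. $\mathcal{A}$ is the set of monotone non-increasing sequences $A=\{a_i\}_{i\ge1}$ of nonnegative reals with $\sum a_i\le1$. $\mathcal{P}_A=\{X\in\mathcal{X}:\exists\{x_i\}_{i\ge1}\subset X\text{ with }\sum_i a_i\delta_{x_i}\le\mu_X\}$, which is a pyramid in $\mathrm{Fix}(\Pi)$. *)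

From HB Require Import structures.
From mathcomp Require Import all_boot all_order all_algebra.
From mathcomp Require Import all_classical all_reals all_analysis.
Set Implicit Arguments. Unset Strict Implicit. Unset Printing Implicit Defensive.
Import Order.TTheory GRing.Theory Num.Theory.
Local Open Scope classical_set_scope.
Local Open Scope ring_scope.
Local Open Scope ereal_scope.
Local Open Scope ring_scope.

Section MetricDefs.
Variables (R : realType) (T : Type) (d : T -> T -> R).

Definition mball (x : T) (e : R) : set T := [set y | d x y < e].

Definition is_metric : Prop :=
  [/\ (forall x, d x x = 0),
      (forall x y, d x y = 0 -> x = y),
      (forall x y, d x y = d y x) &
      (forall x y z, d x z <= d x y + d y z)].

Definition metric_open (U : set T) : Prop :=
  forall x, U x -> exists2 e : R, 0 < e & mball x e `<=` U.

Definition borel_set (B : set T) : Prop :=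
  smallest (sigma_algebra setT) metric_open B.

Definition metric_complete : Prop :=
  forall u : nat -> T,
    (forall e : R, 0 < e -> exists N, forall n m, (N <= n)%N -> (N <= m)%N ->
       d (u n) (u m) < e) ->
    exists l, forall e : R, 0 < e -> exists N, forall n, (N <= n)%N -> d (u n) l < e.

Definition metric_separable : Prop :=
  exists s : nat -> T, forall x (e : R), 0 < e -> exists n, d x (s n) < e.

Definition borel_probability (mu : set T -> \bar R) : Prop :=
  [/\ mu set0 = 0%E,
      (forall B, borel_set B -> (0 <= mu B)%E),
      (forall F : nat -> set T, (forall n, borel_set (F n)) -> trivIset setT F ->
          mu (\bigcup_n F n) = (\sum_(0 <= i <oo) mu (F i))%E) &
      mu setT = 1%E].

Definition full_support (mu : set T -> \bar R) : Prop :=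
  forall x (e : R), 0 < e -> (0 < mu (mball x e))%E.

End MetricDefs.

Record mmSpace (R : realType) := MMSpace {
  mm_carrier : Type;
  mm_dist : mm_carrier -> mm_carrier -> R;
  mm_meas : set mm_carrier -> \bar R;
  mm_metric : is_metric mm_dist;
  mm_complete : metric_complete mm_dist;
  mm_separable : metric_separable mm_dist;
  mm_prob : borel_probability mm_dist mm_meas;
  mm_supp : full_support mm_dist mm_meas
}.

(* ---------- the class \mathcal{A} (indexed from 0 instead of 1) ---------- *)
Definition in_calA (R : realType) (a : nat -> R) : Prop :=
  [/\ (forall i, 0 <= a i),
      (forall i, a i.+1 <= a i) &
      (\sum_(0 <= i <oo) (a i)%:E <= 1)%E].

(* ---------- the pyramid P_A, as a predicate on mm-spaces ----------
   X \in P_A  iff  there are points x_i with  sum_i a_i delta_{x_i} <= mu_X,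
   i.e. for every Borel set B, sum_{i : x_i \in B} a_i <= mu_X(B). *)
Definition P_A (R : realType) (a : nat -> R) (X : mmSpace R) : Prop :=
  exists x : nat -> mm_carrier X,
    forall B : set (mm_carrier X), borel_set (@mm_dist R X) B ->
      (\sum_(0 <= i <oo | x i \in B) (a i)%:E <= @mm_meas R X B)%E.

From mathcomp Require Import all_boot all_order all_algebra.
From mathcomp Require Import all_classical all_reals all_analysis.
From mathcomp Require Import lra.
Set Implicit Arguments. Unset Strict Implicit. Unset Printing Implicit Defensive.
Import Order.TTheory Order.NatMonotonyTheory GRing.Theory Num.Theory.
Local Open Scope classical_set_scope.
Local Open Scope ereal_scope.
Local Open Scope ring_scope.

(* If a and b first differ at index k, say b k < a k, let X be the discrete
   space whose i-th atom has mass b i + c i, where c spreads the missing mass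
   1 - sum b over finitely many indices >= k in portions smaller than
   a k - b k.  Taking x i to be the i-th atom shows X in P_b.  But X is not in
   P_a: each of the points x 0, ..., x k must sit on an atom of mass >= a k,
   i.e. on one of the first k atoms, and these have total mass
   a 0 + ... + a (k-1), which cannot dominate a 0 + ... + a k since a k > 0. *)

Section WeightedCounting.
Variables (R : realType) (w : nat -> R) (w_ge0 : forall i, 0 <= w i).

Definition wcount : {measure set nat -> \bar R} :=
  mseries (fun i => mscale (NngNum (w_ge0 i)) \d_i) 0.

Lemma wcountE A : wcount A = (\sum_(i <oo | i \in A) (w i)%:E)%E.
Proof.
rewrite eseries_mkcond; apply: eq_eseriesr => i _.
rewrite -[LHS]/((w i)%:E * \d_i A)%E.
by rewrite diracE; case: (i \in A); rewrite ?mule1 ?mule0.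
Qed.

Lemma wcount_sub_ltn N A : A `<=` [set i | (i < N)%N] ->
  wcount A = (\sum_(0 <= i < N | i \in A) (w i)%:E)%E.
Proof.
move=> AN; rewrite wcountE (nneseries_split_cond 0 N); last by move=> i _; rewrite lee_fin.
rewrite add0n eseries0 ?adde0 // => i Ni /set_mem /AN /=.
by rewrite ltnNge Ni.
Qed.

Lemma wcount_set1 n : wcount [set n] = (w n)%:E.
Proof.
rewrite (@wcount_sub_ltn n.+1); last by move=> _ /= ->.
rewrite big_mkcond big_nat_recr //= mem_set // big_nat_cond big1 ?add0e // => i.
by rewrite andbT => /andP[_ /ltn_eqF ni]; rewrite memNset //= => /eqP; rewrite ni.
Qed.

Lemma wcount_ltn k : wcount [set i | (i < k)%N] = (\sum_(0 <= i < k) w i)%:E.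
Proof.
rewrite (@wcount_sub_ltn k) // -sumEFin big_nat_cond [RHS]big_nat_cond.
by apply: eq_bigl => i; rewrite andbT andb_idr // => /andP[_ ik]; exact/mem_set.
Qed.

Lemma wcount_ge (A : set nat) n : A n -> ((w n)%:E <= wcount A)%E.
Proof. by move=> An; rewrite -wcount_set1 le_measure ?inE // => _ ->. Qed.

End WeightedCounting.

Section DiscreteMetric.
Variables (R : realType) (T : eqType).

Definition discrete_dist (x y : T) : R := (x != y)%:R.

Lemma discrete_dist_lt_eq (x y : T) (e : R) :
  e <= 1 -> discrete_dist x y < e -> x = y.
Proof.
rewrite /discrete_dist => e_le1; case: eqVneq => //= _ lt1e.
by have := lt_le_trans lt1e e_le1; rewrite ltxx.
Qed.

Lemma discrete_dist_metric : is_metric discrete_dist.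
Proof.
rewrite /discrete_dist; split=> [x|x y|x y|x y z]; first by rewrite eqxx.
- by case: eqVneq => // _ /eqP; rewrite oner_eq0.
- by rewrite eq_sym.
- case: (eqVneq x z) => [_|neq_xz] /=; first by rewrite addr_ge0.
  by case: (eqVneq x y) => [<-|_] /=; rewrite ?neq_xz ?add0r ?lerDl.
Qed.

Lemma discrete_dist_complete : metric_complete discrete_dist.
Proof.
move=> u /(_ 1 ltr01) [N cauchyN]; exists (u N) => e e_gt0; exists N => n leNn.
by rewrite (discrete_dist_lt_eq (lexx 1) (cauchyN n N leNn (leqnn N))) /discrete_dist eqxx.
Qed.

Lemma discrete_open (B : set T) : metric_open discrete_dist B.
Proof. by move=> x Bx; exists 1 => // y /(discrete_dist_lt_eq (lexx 1)) <-. Qed.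

Lemma discrete_borel (B : set T) : borel_set discrete_dist B.
Proof. by move=> G [_]; apply; exact: discrete_open. Qed.

End DiscreteMetric.

Lemma discrete_dist_separable (R : realType) (T : countType) (x0 : T) :
  metric_separable (@discrete_dist R T).
Proof.
exists (fun n => odflt x0 (pickle_inv n)) => x e e_gt0; exists (pickle x).
by rewrite pickleK_inv /discrete_dist eqxx.
Qed.

Lemma P_A_witness_interval_le (R : realType) (X : mmSpace R) (a : nat -> R)
    (x : nat -> mm_carrier X) (B : set (mm_carrier X)) m n :
  (forall i, 0 <= a i) ->
  (forall B, borel_set (@mm_dist R X) B ->
    (\sum_(0 <= i <oo | x i \in B) (a i)%:E <= @mm_meas R X B)%E) ->
  borel_set (@mm_dist R X) B -> (forall i, (m <= i < n)%N -> B (x i)) ->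
  ((\sum_(m <= i < n) a i)%:E <= @mm_meas R X B)%E.
Proof.
move=> a_ge0 x_le Bb xB; apply: le_trans (x_le B Bb).
apply: le_trans (nneseries_lim_ge n _) => [|i _ _]; last by rewrite lee_fin.
rewrite sumEFin lee_fin; have [le_mn|lt_nm] := leqP m n; last first.
  by rewrite big_geq ?(ltnW lt_nm) //; apply: sumr_ge0 => i _; exact: a_ge0.
rewrite (big_cat_nat (leq0n m) le_mn) /=; apply: ler_wpDl.
  by apply: sumr_ge0 => i _; exact: a_ge0.
suff -> : \sum_(m <= i < n | x i \in B) a i = \sum_(m <= i < n) a i by [].
rewrite big_nat_cond [RHS]big_nat_cond; apply: eq_bigl => i.
by rewrite andbT; apply: andb_idr => /xB; exact: mem_set.
Qed.

Section WeightedSpace.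
Variables (R : realType) (w : nat -> R) (w_ge0 : forall i, 0 <= w i).
Hypothesis w_sum1 : (\sum_(0 <= i <oo) (w i)%:E)%E = 1%E.

(* Atoms of weight zero are dropped, as the measure of an mm-space has full support. *)
Definition wsupport := {i : nat | 0 < w i}.

Lemma exists_weight_gt0 : exists i, 0 < w i.
Proof.
apply: contrapT => /forallNP w_le0; move: w_sum1; rewrite eseries0.
  by move/eqP; rewrite eq_sym onee_eq0.
by move=> i _ _; congr (_%:E); apply/eqP; rewrite eq_le w_ge0 andbT leNgt; apply/negP.
Qed.

Definition wmeas (B : set wsupport) : \bar R := wcount w_ge0 (val @` B).

Lemma wmeas_prob : borel_probability (@discrete_dist R wsupport) wmeas.
Proof.
rewrite /wmeas; split=> [|B _|F _ trivF|]; first by rewrite image_set0 measure0.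
- exact: measure_ge0.
- rewrite image_bigcup (measure_bigcup _ setT) //.
    by apply: eq_eseriesl => n; rewrite in_setT.
  move=> i j _ _ [z [[x Fix <-] [y Fjy /val_inj eq_yx]]].
  by apply: (trivF i j) => //; exists x; split => //; rewrite -eq_yx.
- rewrite wcountE -w_sum1 eseries_mkcond; apply: eq_eseriesr => i _.
  have [w_gt0|w_le0] := ltrP 0 (w i); first by rewrite mem_set //; exists (exist _ i w_gt0).
  have -> : w i = 0 by apply/eqP; rewrite eq_le w_le0 w_ge0.
  by rewrite if_same.
Qed.

Lemma wmeas_full_support : full_support (@discrete_dist R wsupport) wmeas.
Proof.
move=> x e e_gt0.
have x_in_ball : (val @` mball (@discrete_dist R wsupport) x e) (val x).
  by exists x => //; rewrite /mball /= /discrete_dist eqxx.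
by apply: lt_le_trans (wcount_ge w_ge0 x_in_ball); rewrite lte_fin; exact: (valP x).
Qed.

Lemma wsupport_separable : metric_separable (@discrete_dist R wsupport).
Proof.
by have [i w_gt0] := exists_weight_gt0; exact: discrete_dist_separable (exist _ i w_gt0).
Qed.

Definition weighted_mmSpace : mmSpace R :=
  MMSpace (@discrete_dist_metric R wsupport) (@discrete_dist_complete R wsupport)
    wsupport_separable wmeas_prob wmeas_full_support.

Lemma P_A_weighted_mmSpace (a : nat -> R) :
  (forall i, 0 <= a i) -> (forall i, a i <= w i) -> P_A a weighted_mmSpace.
Proof.
move=> a_ge0 a_le_w; have [i0 w_gt0] := exists_weight_gt0.
pose x0 : wsupport := exist _ i0 w_gt0.
exists (insubd x0) => B _ /=; rewrite /wmeas wcountE eseries_mkcond [leRHS]eseries_mkcond.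
apply: lee_nneseries => [i _ _|i _]; first by case: ifP; rewrite // lee_fin.
case: ifPn => [xB|_]; last by case: ifP; rewrite // lee_fin.
have [wi_gt0|wi_le0] := ltrP 0 (w i).
  rewrite mem_set; first by rewrite lee_fin.
  by exists (insubd x0 i); [exact: set_mem|rewrite insubdK; last exact: wi_gt0].
have wi0 : w i = 0 by apply/eqP; rewrite eq_le wi_le0 w_ge0.
by rewrite wi0 if_same lee_fin -wi0; exact: a_le_w.
Qed.

Lemma notin_P_A_weighted_mmSpace (a : nat -> R) k :
  (forall i, 0 <= a i) -> (forall i, a i.+1 <= a i) -> 0 < a k ->
  (forall i, (i < k)%N -> w i = a i) -> (forall i, (k <= i)%N -> w i < a k) ->
  ~ P_A a weighted_mmSpace.
Proof.
move=> a_ge0 a_noninc ak_gt0 w_eq w_lt [x x_le].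
(* An atom carrying x j has mass >= a j >= a k, so it is one of the first k. *)
have x_lt_k j : (j <= k)%N -> (val (x j) < k)%N.
  move=> le_jk; rewrite ltnNge; apply/negP => /w_lt w_xj_lt.
  have xj_in i : (j <= i < j.+1)%N -> [set x j] (x i).
    by rewrite ltnS -eqn_leq => /eqP ->.
  have := P_A_witness_interval_le a_ge0 x_le (discrete_borel _) xj_in.
  rewrite big_nat1 /= /wmeas image_set1 wcount_set1 lee_fin => aj_le.
  have := lt_le_trans w_xj_lt (le_trans (nonincnP a_noninc _ _ le_jk) aj_le).
  by rewrite ltxx.
have x_in i : (0 <= i < k.+1)%N -> [set s : wsupport | (val s < k)%N] (x i).
  by move=> /andP[_]; rewrite ltnS; exact: x_lt_k.
have := P_A_witness_interval_le a_ge0 x_le (discrete_borel _) x_in.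
rewrite big_nat_recr //= /wmeas => sum_le.
have sub_k : val @` [set s : wsupport | (val s < k)%N] `<=` [set i | (i < k)%N].
  by move=> _ [s ? <-].
have sum_w : wcount w_ge0 [set i | (i < k)%N] = (\sum_(0 <= i < k) a i)%:E.
  by rewrite wcount_ltn; congr _%:E; apply: eq_big_nat => i /andP[_]; exact: w_eq.
have le_sum_a : (wcount w_ge0 (val @` [set s : wsupport | (val s < k)%N])
    <= (\sum_(0 <= i < k) a i)%:E)%E.
  by rewrite -sum_w; apply: le_measure sub_k; rewrite inE.
have := le_trans sum_le le_sum_a; rewrite lee_fin; lra.
Qed.

End WeightedSpace.

Lemma spread_mass (R : realType) (T e : R) k : 0 <= T -> 0 < e ->
  exists c : nat -> R, [/\ forall i, 0 <= c i < e,
    forall i, (i < k)%N -> c i = 0 & (\sum_(0 <= i <oo) (c i)%:E)%E = T%:E].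
Proof.
move=> T_ge0 e_gt0; set M := (Num.truncn (T / e)).+1.
have M_gt0 : 0 < M%:R :> R by rewrite ltr0n.
have TM_ge0 : 0 <= T / M%:R by rewrite divr_ge0 // ltW.
have TM_lt_e : T / M%:R < e.
  by rewrite ltr_pdivrMr // mulrC -ltr_pdivrMr //; exact: truncnS_gt.
exists (fun i => if (k <= i < k + M)%N then T / M%:R else 0); split.
- by move=> i; case: ifP; rewrite ?lexx ?e_gt0 ?TM_ge0 ?TM_lt_e.
- by move=> i lt_ik; rewrite leqNgt lt_ik.
rewrite (nneseries_split 0 (k + M)); last by move=> i _; case: ifP; rewrite lee_fin.
rewrite add0n eseries0 ?adde0 => [|i le_i _]; last by rewrite ltnNge le_i andbF.
rewrite sumEFin (big_cat_nat (leq0n k)) ?leq_addr //= big_nat_cond big1 ?add0r.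
  rewrite (eq_big_nat _ _ (F2 := fun=> T / M%:R)) => [|i /andP[-> ->]//].
  by rewrite sumr_const_nat addKn -[_ *+ M]mulr_natr divfK // gt_eqF.
by move=> i /andP[/andP[_ lt_ik] _]; rewrite leqNgt lt_ik.
Qed.

Lemma fill_to_probability (R : realType) (b : nat -> R) (e : R) k :
  (forall i, 0 <= b i) -> (\sum_(0 <= i <oo) (b i)%:E <= 1)%E -> 0 < e ->
  exists w : nat -> R, [/\ forall i, b i <= w i < b i + e,
    forall i, (i < k)%N -> w i = b i & (\sum_(0 <= i <oo) (w i)%:E)%E = 1%E].
Proof.
move=> b_ge0 b_sum_le1 e_gt0.
set Sb := (\sum_(0 <= i <oo) (b i)%:E)%E in b_sum_le1 *.
have Sb_ge0 : (0 <= Sb)%E by apply: nneseries_ge0 => i _ _; rewrite lee_fin.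
have Sb_fin : Sb \is a fin_num by rewrite ge0_fin_numE // (le_lt_trans b_sum_le1) ?ltry.
have gap_ge0 : 0 <= 1 - fine Sb by rewrite subr_ge0 -lee_fin fineK.
have [c [c_bounds c_eq0 c_sum]] := spread_mass k gap_ge0 e_gt0.
exists (fun i => b i + c i); split.
- by move=> i; have /andP[c_ge0 c_lt] := c_bounds i; rewrite lerDl c_ge0 ltrD2l c_lt.
- by move=> i /c_eq0 ->; rewrite addr0.
under eq_eseriesr do rewrite EFinD.
rewrite nneseriesD => [|i _ _|i _ _].
- by rewrite -/Sb c_sum -(fineK Sb_fin) -EFinD addrC subrK.
- by rewrite lee_fin; exact: b_ge0.
- by rewrite lee_fin; have /andP[] := c_bounds i.
Qed.

Lemma separating_mmSpace (R : realType) (a b : nat -> R) k :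
  in_calA a -> in_calA b -> (forall i, (i < k)%N -> a i = b i) -> b k < a k ->
  exists X : mmSpace R, P_A b X /\ ~ P_A a X.
Proof.
move=> [a_ge0 a_noninc _] [b_ge0 b_noninc b_sum_le1] a_eq_b lt_bak.
have gap_gt0 : 0 < a k - b k by rewrite subr_gt0.
have [w [w_bounds w_eq_b w_sum1]] := fill_to_probability k b_ge0 b_sum_le1 gap_gt0.
have w_ge0 i : 0 <= w i by have /andP[le_bw _] := w_bounds i; exact: le_trans (b_ge0 i) le_bw.
exists (weighted_mmSpace w_ge0 w_sum1); split.
  by apply: P_A_weighted_mmSpace => // i; have /andP[] := w_bounds i.
apply: (notin_P_A_weighted_mmSpace a_ge0 a_noninc (k := k)).
- exact: le_lt_trans (b_ge0 k) lt_bak.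
- by move=> i lt_ik; rewrite w_eq_b // a_eq_b.
- move=> i le_ki; have /andP[_ w_lt] := w_bounds i.
  have := nonincnP b_noninc _ _ le_ki; lra.
Qed.

Theorem lemma4p2 (R : realType) (a b : nat -> R) :
  in_calA a -> in_calA b ->
  (forall X : mmSpace R, P_A a X <-> P_A b X) ->
  a = b.
Proof.
move=> a_calA b_calA same_P; apply/funext => i; apply: contrapT => neq_ab_i.
have : exists n, a n != b n by exists i; apply/eqP.
case/ex_minnP=> k neq_ab_k k_min.
have eq_below_k j : (j < k)%N -> a j = b j.
  by move=> lt_jk; apply/eqP; apply: contraTT lt_jk => /k_min; rewrite -leqNgt.
case/orP: (lt_total neq_ab_k) => [lt_ab|lt_ba].
- have eq_below_k' j (lt_jk : (j < k)%N) : b j = a j by rewrite eq_below_k.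
  have [X [PaX not_PbX]] := separating_mmSpace b_calA a_calA eq_below_k' lt_ab.
  by apply/not_PbX/same_P.
- have [X [PbX not_PaX]] := separating_mmSpace a_calA b_calA eq_below_k lt_ba.
  by apply/not_PaX/same_P.
Qed.
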